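(* Let $G$ be a semi-perfect graph and let $k$ be a positive integer. The following statements are equivalent: (a) $G$ has a $k$-tight clique partition; (b) $G$ has a $k$-tight $\alpha$-clique partition; (c) every $\alpha$-clique partition of $G$ is $k$-tight; (d) $\mu_\alpha(G)\le k-1$.
   Context: All graphs are finite, simple and undirected. For a graph $G$, $\alpha(G)$ is the maximum size of an independent set and $i(G)$ is the minimum size of a maximal (with respect to inclusion) independent set; the independence gap is $\mu_\alpha(G)=\alpha(G)-i(G)$. $\theta(G)$ denotes the minimum number of cliques whose union is $V(G)$. A graph $G$ is semi-perfect if $\alpha(G)=\theta(G)$. A clique partition of $G$ is a set of pairwise disjoint cliques whose union is $V(G)$; an $\alpha$-clique partition is a clique partition consisting of exactly $\alpha(G)$ cliques. For a positive integer $k$, a clique partition of $G$ is $k$-tight if for every $k$ cliques of the partition, their union intersects every maximal independent set of $G$. *)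

(* A simple graph is a symmetric irreflexive relation e on a finType T. *)
From mathcomp Require Import all_boot.
Set Implicit Arguments. Unset Strict Implicit. Unset Printing Implicit Defensive.

Section Graphs.
Variables (T : finType) (e : rel T).

Definition independent (S : {set T}) : bool :=
  [forall x in S, forall y in S, ~~ e x y].

Definition clique (S : {set T}) : bool :=
  [forall x in S, forall y in S, (x != y) ==> e x y].

Definition maximal_independent (S : {set T}) : bool :=
  maxset independent S.

Definition alpha : nat := \max_(S : {set T} | independent S) #|S|.

Definition indep_domination : nat :=
  \big[minn/#|T|]_(S : {set T} | maximal_independent S) #|S|.

(* independence gap mu_alpha(G) = alpha(G) - i(G)  (alpha >= i, so truncation is harmless) *)
Definition indep_gap : nat := alpha - indep_domination.

Definition clique_cover_number : nat :=
  \big[minn/#|T|]_(P : {set {set T}} |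
      [forall C in P, clique C] && (cover P == [set: T])) #|P|.

Definition semi_perfect : Prop := alpha = clique_cover_number.

Definition clique_partition (P : {set {set T}}) : bool :=
  partition P [set: T] && [forall C in P, clique C].

Definition alpha_clique_partition (P : {set {set T}}) : bool :=
  clique_partition P && (#|P| == alpha).

Definition k_tight (k : nat) (P : {set {set T}}) : Prop :=
  forall Q : {set {set T}}, Q \subset P -> #|Q| = k ->
  forall I : {set T}, maximal_independent I -> cover Q :&: I != set0.

End Graphs.

(* In a clique partition P every block meets an independent set I in at most
   one vertex, so I meets exactly #|I| blocks and #|P| - #|I| blocks avoid it.
   Hence P is k-tight iff #|P| - #|I| <= k - 1 for every maximal independent I.
   In a semi-perfect graph every clique partition has at least theta = alpha
   blocks, and a minimum clique cover refines to a clique partition with exactly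
   alpha blocks; so all four conditions reduce to alpha - i(G) <= k - 1. *)
From mathcomp Require Import all_boot all_order zify.
Set Implicit Arguments. Unset Strict Implicit.
Import Order.TTheory.

Lemma subset_of_card (U : finType) (M : {set U}) n :
  n <= #|M| -> exists2 Q : {set U}, Q \subset M & #|Q| = n.
Proof.
case/card_geqP => s [uniq_s size_s sM]; exists [set x in s].
  by apply/subsetP => x; rewrite inE => /sM.
by rewrite cardsE; move/card_uniqP: uniq_s ->.
Qed.

Section Graph.
Variables (T : finType) (e : rel T).

Lemma sub_clique (A B : {set T}) : A \subset B -> clique e B -> clique e A.
Proof.
move=> /subsetP sAB /forall_inP cB; apply/forall_inP => x xA.
by apply/forall_inP => y yA; exact: (forall_inP (cB x (sAB x xA)) y (sAB y yA)).
Qed.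

Lemma clique_partition_of_cover (P : {set {set T}}) :
  [forall C in P, clique e C] -> cover P = [set: T] ->
  exists2 P', clique_partition e P' & #|P'| <= #|P|.
Proof.
move=> /forall_inP cliqueP covP.
pose block x := odflt set0 [pick C in P | x \in C].
have blockP x : block x \in P /\ x \in block x.
  have : x \in cover P by rewrite covP inE.
  case/bigcupP => C PC xC; rewrite /block; case: pickP => [D /andP[] //|].
  by move/(_ C); rewrite PC xC.
exists (preim_partition block [set: T]).
  rewrite /clique_partition preim_partitionP; apply/forall_inP => B.
  case/imsetP => x _ ->; apply: sub_clique (cliqueP _ (blockP x).1).
  by apply/subsetP => y; rewrite inE => /andP[_ /eqP ->]; exact: (blockP y).2.
have -> : preim_partition block [set: T] =
          (fun C => [set y in [set: T] | C == block y]) @: (block @: [set: T]).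
  by rewrite -imset_comp.
apply: leq_trans (leq_imset_card _ _) (subset_leq_card _).
by apply/subsetP => C /imsetP [x _ ->]; exact: (blockP x).1.
Qed.

Lemma pblock_inj_independent (P : {set {set T}}) (I : {set T}) :
  clique_partition e P -> independent e I -> {in I &, injective (pblock P)}.
Proof.
case/andP => /and3P[/eqP covP _ _] /forall_inP cliqueP /forall_inP indI.
move=> x y xI yI eq_xy; apply/eqP; apply: contraT => neq_xy.
have Px : x \in cover P by rewrite covP inE.
have /forall_inP cliqueB := cliqueP _ (pblock_mem Px).
have xB : x \in pblock P x by rewrite mem_pblock.
have yB : y \in pblock P x by rewrite eq_xy mem_pblock covP inE.
have := forall_inP (cliqueB x xB) y yB.
by rewrite neq_xy /= => exy; have := forall_inP (indI x xI) y yI; rewrite exy.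
Qed.

Lemma k_tight_card (k : nat) (P : {set {set T}}) :
  0 < k -> partition P [set: T] -> k_tight e k P ->
  forall I, maximal_independent e I -> #|P| - #|I| <= k - 1.
Proof.
move=> k_gt0 /and3P[/eqP covP trivP _] tightP I maxI; rewrite leqNgt.
apply/negP => gap_ge_k.
pose avoiding := P :\: pblock P @: I.
have : k <= #|avoiding|.
  rewrite cardsD; apply: leq_trans (leq_sub2l _ (subset_leq_card (subsetIr _ _))).
  by apply: leq_trans (leq_sub2l _ (leq_imset_card _ _)); lia.
case/subset_of_card => Q sQA cardQ.
have sQP : Q \subset P by apply: subset_trans sQA (subsetDl _ _).
have /set0Pn [x] := tightP Q sQP cardQ I maxI.
rewrite inE => /andP[/bigcupP [C QC xC] xI].
have /setDP [_] := subsetP sQA C QC; apply/negP/negPn/imsetP; exists x => //.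
by rewrite (def_pblock trivP (subsetP sQP C QC) xC).
Qed.

Lemma card_k_tight (k : nat) (P : {set {set T}}) :
  0 < k -> clique_partition e P ->
  (forall I, maximal_independent e I -> #|P| - #|I| <= k - 1) -> k_tight e k P.
Proof.
move=> k_gt0 cpP gapP Q sQP cardQ I maxI; apply/negP => /eqP disjQI.
have injI := pblock_inj_independent cpP (maxsetp maxI).
have covP : cover P = [set: T] by case/andP: cpP => /and3P[/eqP].
have : pblock P @: I \subset P :\: Q.
  apply/subsetP => B /imsetP [x xI ->].
  have Px : x \in cover P by rewrite covP inE.
  rewrite inE pblock_mem // andbT; apply/negP => QB.
  have : x \in cover Q :&: I.
    by rewrite inE xI andbT; apply/bigcupP; exists (pblock P x); rewrite ?mem_pblock.
  by rewrite disjQI inE.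
move/subset_leq_card; rewrite card_in_imset // cardsD (setIidPr sQP).
have := gapP I maxI; have := subset_leq_card sQP; rewrite cardQ.
by move: #|P| #|I| k_gt0; lia.
Qed.

Lemma alpha_le_card : alpha e <= #|T|.
Proof. by apply/bigmax_leqP => S _; exact: max_card. Qed.

Lemma indep_gap_leP m :
  (forall I, maximal_independent e I -> alpha e - #|I| <= m) <-> indep_gap e <= m.
Proof.
rewrite /indep_gap /indep_domination; split => [gapI | gap_le I maxI].
  rewrite leq_subLR addnC -leq_subLR; apply: (@le_bigmin _ nat).
    by have := alpha_le_card; lia.
  by move=> I maxI; have := gapI I maxI; lia.
apply: leq_trans gap_le; apply: leq_sub2l; exact: (@bigmin_le_cond _ nat).
Qed.

Lemma indep_gap_k_tight k P :
  0 < k -> alpha_clique_partition e P -> indep_gap e <= k - 1 -> k_tight e k P.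
Proof.
move=> k_gt0 /andP[cpP /eqP cardP] /indep_gap_leP gapI.
by apply: card_k_tight k_gt0 cpP _ => I maxI; rewrite cardP; exact: gapI.
Qed.

Section SemiPerfect.
Hypothesis semi_perfect_e : semi_perfect e.

Lemma alpha_le_card_clique_partition P : clique_partition e P -> alpha e <= #|P|.
Proof.
case/andP => /and3P[covP _ _] cliqueP; rewrite semi_perfect_e.
by apply: (@bigmin_le_cond _ nat); rewrite cliqueP covP.
Qed.

Lemma exists_alpha_clique_partition : exists P, alpha_clique_partition e P.
Proof.
suff [P cpP le_alpha] : exists2 P, clique_partition e P & #|P| <= alpha e.
  exists P; rewrite /alpha_clique_partition cpP eqn_leq le_alpha.
  exact: alpha_le_card_clique_partition.
rewrite semi_perfect_e /clique_cover_number; elim/big_ind: _.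
- have [||P cpP le_card] := @clique_partition_of_cover [set [set x] | x in [set: T]].
  + apply/forall_inP => _ /imsetP [x _ ->]; apply/forall_inP => y /set1P ->.
    by apply/forall_inP => z /set1P ->; rewrite eqxx.
  + apply/setP => x; rewrite !inE; apply/bigcupP.
    by exists [set x]; rewrite ?set11 ?imset_f.
  exists P => //; apply: leq_trans le_card _.
  by rewrite -[X in _ <= X]cardsT leq_imset_card.
- by move=> m n; rewrite /minn; case: ifP.
- move=> P /andP[cliqueP /eqP covP].
  by have [P'] := clique_partition_of_cover cliqueP covP; exists P'.
Qed.

Lemma k_tight_indep_gap k P :
  0 < k -> clique_partition e P -> k_tight e k P -> indep_gap e <= k - 1.
Proof.
move=> k_gt0 cpP tightP; apply/indep_gap_leP => I maxI.
have := k_tight_card k_gt0 (proj1 (andP cpP)) tightP maxI.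
have := alpha_le_card_clique_partition cpP; lia.
Qed.

End SemiPerfect.
End Graph.

Theorem mainTheorem4 (T : finType) (e : rel T)
  (e_sym : symmetric e) (e_irr : irreflexive e)
  (Hsp : semi_perfect e) (k : nat) (Hk : 0 < k) :
  [/\ ((exists P, clique_partition e P /\ k_tight e k P) <->
        (exists P, alpha_clique_partition e P /\ k_tight e k P)),
      ((exists P, alpha_clique_partition e P /\ k_tight e k P) <->
        (forall P, alpha_clique_partition e P -> k_tight e k P)) &
      ((forall P, alpha_clique_partition e P -> k_tight e k P) <->
        indep_gap e <= k - 1)].
Proof.
have [P0 aP0] := exists_alpha_clique_partition Hsp.
have cp_of_alpha P : alpha_clique_partition e P -> clique_partition e P.
  by case/andP.
have tight_all P : clique_partition e P -> k_tight e k P ->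
    forall P', alpha_clique_partition e P' -> k_tight e k P'.
  move=> cpP tightP P' aP'.
  exact: (indep_gap_k_tight Hk aP' (k_tight_indep_gap Hsp Hk cpP tightP)).
split; split.
- by case=> P [cpP tightP]; exists P0; split; last exact: tight_all cpP tightP _ aP0.
- by case=> P [aP tightP]; exists P; split; first exact: cp_of_alpha.
- by case=> P [aP tightP]; exact: tight_all (cp_of_alpha _ aP) tightP.
- by move=> tight_alpha; exists P0; split; last exact: tight_alpha.
- move=> tight_alpha.
  exact: (k_tight_indep_gap Hsp Hk (cp_of_alpha _ aP0) (tight_alpha _ aP0)).
- by move=> gap_le P aP; exact: (indep_gap_k_tight Hk aP gap_le).
Qed.
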